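(* Let $r\ge2$ and let $\mathcal{P}$ be a set of $r$-patterns such that the family of all $\mathcal{P}$-cliques is reconstructible. Then there is a constant $C>0$ such that a.a.s. $z_{\mathcal{P}}(\mathbb{RM}_n^{(r)})\le C n^{1/r}$.
   Context: An ordered $r$-matching of size $k$ is a set of $k$ pairwise disjoint $r$-element subsets (edges) of a linearly ordered vertex set of size $rk$; $\mathbb{RM}^{(r)}_n$ is a uniformly random ordered $r$-matching on $[rn]$. An $r$-pattern is an ordered $r$-matching of size 2 (written as a word over $\{A,B\}$, each letter $r$ times). For a set $\mathcal P$ of $r$-patterns, a $\mathcal P$-clique is an ordered matching all of whose pairs of edges form patterns in $\mathcal P$ (i.e., induce matchings order-isomorphic to members of $\mathcal P$), and $z_{\mathcal P}(M)$ is the largest size of a $\mathcal P$-clique contained in $M$. The trace $\mathrm{tr}(M)$ of an ordered $r$-matching $M$ is the word over $[r]$ obtained by writing, at each vertex (in the vertex order), the number $i$ if that vertex is the $i$-th vertex (from the left) of its edge. A family $\mathcal F$ of ordered matchings is reconstructible if no two distinct members of $\mathcal F$ on the same ordered vertex set have the same trace. ''A.a.s.'' means with probability tending to 1 as $n\to\infty$. *)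

From HB Require Import structures.
From mathcomp Require Import all_boot all_order all_algebra.
From mathcomp Require Import all_classical all_reals all_analysis.
Set Implicit Arguments. Unset Strict Implicit. Unset Printing Implicit Defensive.
Import Order.TTheory GRing.Theory Num.Theory.

Definition is_rmatching (r N : nat) (M : {set {set 'I_N}}) : bool :=
  [&& [forall e in M, #|e| == r], finset.trivIset M & finset.cover M == [set: 'I_N]].

(* An r-pattern, written as a word over {A,B} (true = A, false = B),
   with A the edge containing the leftmost vertex: a word of length 2r
   with r letters A, starting with A. *)
Definition is_rpattern (r : nat) (w : seq bool) : bool :=
  [&& size w == (2 * r)%N, count id w == r & head false w].

(* The pattern (word) formed by two disjoint edges e and f: list the
   vertices of e :|: f in increasing order, writing A for the vertices of
   the edge containing the leftmost of them and B for the others. *)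
Definition pattern_of (N : nat) (e f : {set 'I_N}) : seq bool :=
  let s := [seq v <- enum 'I_N | (v \in e) || (v \in f)] in
  match s with
  | [::] => [::]
  | h :: _ => [seq ((v \in e) == (h \in e)) | v <- s]
  end.

Definition is_clique (N : nat) (P : seq bool -> bool) (S : {set {set 'I_N}}) : bool :=
  [forall e in S, forall f in S, (e != f) ==> P (pattern_of e f)].

Definition zP (N : nat) (P : seq bool -> bool) (M : {set {set 'I_N}}) : nat :=
  \max_(S : {set {set 'I_N}} | (S \subset M) && is_clique P S) #|S|.

(* Position (1-based, from the left) of vertex v inside its edge. *)
Definition pos_in_edge (N : nat) (M : {set {set 'I_N}}) (v : 'I_N) : nat :=
  #|[set u : 'I_N | (u <= v)%N && [exists e in M, (u \in e) && (v \in e)]]|.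

Definition trace (N : nat) (M : {set {set 'I_N}}) : seq nat :=
  [seq pos_in_edge M v | v <- enum 'I_N].

Definition cliques_reconstructible (r : nat) (P : seq bool -> bool) : Prop :=
  forall (N : nat) (M1 M2 : {set {set 'I_N}}),
    is_rmatching r M1 -> is_rmatching r M2 ->
    is_clique P M1 -> is_clique P M2 ->
    trace M1 = trace M2 -> M1 = M2.

Definition prob_RM (R : realType) (r n : nat) (Q : {set {set 'I_(r * n)}} -> bool) : R :=
  (#|[set M : {set {set 'I_(r * n)}} | is_rmatching r M && Q M]|%:R / #|[set M : {set {set 'I_(r * n)}} | is_rmatching r M]|%:R)%R.

From HB Require Import structures.
From mathcomp Require Import all_boot all_order all_algebra.
From mathcomp Require Import ring unstable.
Set Implicit Arguments. Unset Strict Implicit. Unset Printing Implicit Defensive.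

(* First moment method.  After an order-preserving renumbering of its vertex
   set, a P-clique of size k is an ordered r-matching on [rk], hence is
   determined by that vertex set and its trace: there are at most
   C(rn, rk) (r+1)^(rk) of them.  Each lies in num_rmatchings r (n - k) perfect
   r-matchings of [rn], and (rn)^_(rk) num_rmatchings r (n - k) =
   r!^k n^_k num_rmatchings r n, so the proportion of r-matchings containing a
   P-clique of size k is at most (r+1)^(rk) r!^k n^k / (rk)!.  Since
   (rk)! >= (rk/e)^(rk), this is at most 1/n once k^r >= 2^r c n for a
   suitable constant c, i.e. once k > C n^(1/r). *)

(* Choose the r - 1 partners of a fixed vertex, then match the other r (m - 1). *)
Fixpoint num_rmatchings (r m : nat) : nat :=
  if m is m'.+1 then 'C((r * m).-1, r.-1) * num_rmatchings r m' else 1.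

Lemma num_rmatchings_gt0 r m : 0 < r -> 0 < num_rmatchings r m.
Proof.
move=> r_gt0; elim: m => //= m IH; rewrite muln_gt0 IH andbT bin_gt0.
by rewrite -!subn1 leq_sub2r // leq_pmulr.
Qed.

Lemma ffact_mulnS r m : 0 < r -> (r * m.+1) ^_ r = m.+1 * r`! * 'C((r * m.+1).-1, r.-1).
Proof. by case: r => // r _; rewrite ffactnS -bin_ffact factS; ring. Qed.

Lemma num_rmatchings_fact r m : 0 < r ->
  num_rmatchings r m * (r`! ^ m * m`!) = (r * m)`!.
Proof.
move=> r_gt0; elim: m => [|m IH]; first by rewrite muln0.
have r_le : r <= r * m.+1 by rewrite leq_pmulr.
rewrite -(ffact_fact r_le) mulnS addKn -IH -mulnS ffact_mulnS //=.
by rewrite factS expnS; ring.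
Qed.

Lemma ffact_num_rmatchings r n k : 0 < r -> k <= n ->
  (r * n) ^_ (r * k) * num_rmatchings r (n - k) = r`! ^ k * n ^_ k * num_rmatchings r n.
Proof.
move=> r_gt0 le_kn.
have pos : 0 < r`! ^ (n - k) * (n - k)`! by rewrite muln_gt0 expn_gt0 !fact_gt0.
apply/eqP; rewrite -(eqn_pmul2r pos) -!mulnA num_rmatchings_fact //.
rewrite mulnBr ffact_fact ?leq_pmul2l // -num_rmatchings_fact //.
rewrite -(ffact_fact le_kn); have -> : r`! ^ n = r`! ^ k * r`! ^ (n - k) by rewrite -expnD subnKC.
by apply/eqP; ring.
Qed.

Lemma cover_setU (T : finType) (P Q : {set {set T}}) : cover (P :|: Q) = cover P :|: cover Q.
Proof. exact: bigcup_setU. Qed.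

Lemma cover_setD (T : finType) (P Q : {set {set T}}) : trivIset P -> Q \subset P ->
  cover (P :\: Q) = cover P :\: cover Q.
Proof.
move=> /trivIsetP tP /subsetP sQP; apply/setP => x; rewrite !inE.
apply/bigcupP/andP => [[A /setDP[AP AQ] xA]|[xQ /bigcupP[A AP xA]]].
  split; last by apply/bigcupP; exists A.
  apply/bigcupP => -[B BQ xB].
  have AB : A != B by apply: contraNneq AQ => ->.
  by have := tP _ _ AP (sQP _ BQ) AB; rewrite disjoint_sym => /disjointFr/(_ xB); rewrite xA.
by exists A => //; rewrite inE AP andbT; apply: contra xQ => AQ; apply/bigcupP; exists A.
Qed.

Lemma setUD_sub (T : finType) (A B : {set T}) : A \subset B -> A :|: (B :\: A) = B.
Proof. by move=> sAB; rewrite setDE setUIr setUCr setIT; apply/setUidPr. Qed.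

Section RMatchings.
Variables (T : finType) (r : nat).
Hypothesis r_gt0 : 0 < r.

Definition runiform (P : {set {set T}}) : bool := [forall A in P, #|A| == r].

Definition rmatchings_on (W : {set T}) : {set {set {set T}}} :=
  [set M | [&& runiform M, trivIset M & cover M == W]].

Lemma runiformP (P : {set {set T}}) : reflect {in P, forall A : {set T}, #|A| = r} (runiform P).
Proof. by apply: (iffP forall_inP) => h A /h/eqP. Qed.

Lemma runiformS (P Q : {set {set T}}) : P \subset Q -> runiform Q -> runiform P.
Proof. by move=> /subsetP sPQ /runiformP uQ; apply/runiformP => A /sPQ/uQ. Qed.

Lemma runiformU (P Q : {set {set T}}) : runiform (P :|: Q) = runiform P && runiform Q.
Proof.
apply/runiformP/andP => [uPQ | [/runiformP uP /runiformP uQ] A /setUP[/uP|/uQ]] //.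
by split; apply/runiformP => A A_in; apply: uPQ; rewrite inE A_in ?orbT.
Qed.

Lemma card_cover_runiform (P : {set {set T}}) : runiform P -> trivIset P ->
  #|cover P| = r * #|P|.
Proof.
move=> /runiformP uP /eqP <-.
by rewrite (eq_bigr (fun _ => r)) // sum_nat_const mulnC.
Qed.

Lemma rmatchings_on_sup (W : {set T}) (S : {set {set T}}) :
  runiform S -> trivIset S -> cover S \subset W ->
  [set M in rmatchings_on W | S \subset M] =
  (fun M' => S :|: M') @: rmatchings_on (W :\: cover S).
Proof.
move=> uS tS sSW; apply/setP => M; rewrite inE; apply/andP/imsetP.
- case; rewrite inE => /and3P[uM tM /eqP cM] sSM.
  exists (M :\: S); last by rewrite setUD_sub.
  by rewrite inE (runiformS _ uM) ?subsetDl // trivIsetD // cover_setD // cM /=.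
- case=> M' ; rewrite inE => /and3P[uM' tM' /eqP cM'] ->.
  split; last exact: subsetUl.
  have dSM' : [disjoint cover S & cover M'].
    by have := subxx (W :\: cover S); rewrite {1}cM' subsetD disjoint_sym => /andP[].
  rewrite inE cover_setU cM' setUD_sub // trivIsetU // eqxx andbT.
  by rewrite runiformU uS uM'.
Qed.

Lemma card_rmatchings_on_sup (W : {set T}) (S : {set {set T}}) :
  runiform S -> trivIset S -> cover S \subset W ->
  #|[set M in rmatchings_on W | S \subset M]| = #|rmatchings_on (W :\: cover S)|.
Proof.
move=> uS tS sSW; rewrite rmatchings_on_sup //; apply: card_in_imset => M1 M2.
suff SUK M' : M' \in rmatchings_on (W :\: cover S) -> (S :|: M') :\: S = M'.
  by move=> /SUK {2}<- /SUK {2}<- ->.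
rewrite inE => /and3P[uM' _ /eqP cM'].
rewrite setDUl setDv set0U; apply/setDidPl/pred0P => A /=; apply/andP => -[AM' AS].
have /card_gt0P[x xA] : 0 < #|A| by move/runiformP: uM' => ->.
have : x \in cover M' by apply/bigcupP; exists A.
by rewrite cM' inE => /andP[/negP[]]; apply/bigcupP; exists A.
Qed.

Lemma rmatchings_on0 : rmatchings_on set0 = [set set0].
Proof.
apply/setP => M; rewrite !inE; apply/idP/eqP => [/and3P[uM _ /eqP cM]|->].
  apply/eqP; rewrite -subset0; apply/subsetP => A AM.
  have /card_gt0P[x xA] : 0 < #|A| by move/runiformP: uM => ->.
  have : x \in cover M by apply/bigcupP; exists A.
  by rewrite cM inE.
apply/and3P; split; first by apply/runiformP => A; rewrite inE.
  by rewrite /trivIset /cover !big_set0 cards0.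
by rewrite /cover big_set0.
Qed.

Lemma pblock_rmatchings_on (W : {set T}) M v : M \in rmatchings_on W -> v \in W ->
  pblock M v \in M /\ #|pblock M v :\ v| = r.-1.
Proof.
rewrite inE => /and3P[/runiformP uM _ /eqP cM]; rewrite -cM => vM.
have pM := pblock_mem vM; split => //.
by move: (cardsD1 v (pblock M v)); rewrite mem_pblock vM uM // add1n => ->.
Qed.

Lemma pblock_rmatchings_onE (W : {set T}) M v (A : {set T}) : M \in rmatchings_on W -> v \in W ->
  v \notin A -> (pblock M v :\ v == A) = ([set v |: A] \subset M).
Proof.
move=> MW vW vA; have [pM _] := pblock_rmatchings_on MW vW.
move: MW; rewrite inE sub1set => /and3P[_ tM /eqP cM].
apply/eqP/idP => [<- | vAM]; first by rewrite setD1K // mem_pblock cM.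
by rewrite (def_pblock tM vAM (setU11 _ _)) setU1K.
Qed.

Lemma card_rmatchings_on m (W : {set T}) :
  #|W| = r * m -> #|rmatchings_on W| = num_rmatchings r m.
Proof.
elim: m W => [|m IH] W cW.
  by rewrite muln0 in cW; rewrite (cards0_eq cW) rmatchings_on0 cards1.
have /card_gt0P[v vW] : 0 < #|W| by rewrite cW muln_gt0 r_gt0.
pose D := [set A : {set T} | A \subset W :\ v & #|A| == r.-1].
rewrite -sum1_card (partition_big (fun M => pblock M v :\ v) (mem D)) /=; last first.
  move=> M MW; have [pM cp] := pblock_rmatchings_on MW vW.
  rewrite inE cp eqxx andbT setSD //; move: MW; rewrite inE => /and3P[_ _ /eqP <-].
  exact: bigcup_sup pM.
rewrite (eq_bigr (fun _ => num_rmatchings r m)) => [|A]; last first.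
  rewrite inE => /andP[sAW /eqP cA]; rewrite sum1dep_card.
  have vA : v \notin A by apply/negP => /(subsetP sAW); rewrite !inE eqxx.
  have svAW : v |: A \subset W by rewrite subUset sub1set vW (subset_trans sAW) ?subsetDl.
  rewrite (eq_card (B := [set M in rmatchings_on W | [set v |: A] \subset M])); last first.
    move=> M; rewrite [LHS]in_set [RHS]in_set.
    by apply: andb_id2l => MW; exact: (pblock_rmatchings_onE MW vW vA).
  rewrite card_rmatchings_on_sup ?cover1 ?trivIset1 //; last first.
    by apply/runiformP => B; rewrite inE => /eqP ->; rewrite cardsU1 vA cA add1n prednK.
  apply: IH; rewrite cardsD (setIidPr svAW) cardsU1 vA cA cW add1n prednK // mulnS.
  by rewrite addKn.
rewrite sum_nat_const /D cards_draws /=.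
by congr (_ * _); rewrite (cardsD1 v W) vW add1n in cW; rewrite -cW.
Qed.
End RMatchings.

Lemma sorted_val_enum n (A : {pred 'I_n}) : sorted ltn [seq val i | i <- enum A].
Proof.
rewrite -[enum _](eq_filter (mem_enum _)) -(eq_filter (mem_map val_inj _)) -filter_map.
by rewrite (sorted_filter ltn_trans) // unlock val_ord_enum iota_ltn_sorted.
Qed.

Section Relabel.
Variables (N : nat) (U : {set 'I_N}).
Local Notation val_of := (@enum_val _ (mem U)).

Lemma enum_val_ltn (i j : 'I_#|U|) : i < j -> val_of i < val_of j.
Proof.
move=> ij; have := sorted_ltn_nth ltn_trans 0 (sorted_val_enum (mem U)).
move=> /(_ i j); rewrite !inE size_map -cardE !ltn_ord => /(_ isT isT ij).
by rewrite !(nth_map (enum_val i)) -?cardE // -!enum_val_nth.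
Qed.

(* enum_val enumerates U increasingly, so relabel S is S renumbered
   order-preservingly onto 'I_#|U|. *)
Definition relabel (S : {set {set 'I_N}}) : {set {set 'I_#|U|}} :=
  [set val_of @^-1: e | e : {set _} in S].

Lemma preimset_enum_valK (e : {set 'I_N}) : e \subset U -> val_of @: (val_of @^-1: e) = e.
Proof.
move=> /subsetP eU; apply/setP => x; apply/imsetP/idP => [[i]|xe].
  by rewrite inE => ie ->.
by exists (enum_rank_in (eU _ xe) x); rewrite ?inE enum_rankK_in // eU.
Qed.

Lemma card_preimset_enum_val (e : {set 'I_N}) : e \subset U -> #|val_of @^-1: e| = #|e|.
Proof. by move=> eU; rewrite -{2}(preimset_enum_valK eU) card_imset //; exact: enum_val_inj. Qed.

Lemma filter_enum_relabel (e f : {set 'I_N}) : e \subset U -> f \subset U ->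
  [seq v <- enum 'I_N | (v \in e) || (v \in f)] =
  map val_of [seq i <- enum 'I_#|U| | (val_of i \in e) || (val_of i \in f)].
Proof.
move=> /subsetP eU /subsetP fU; apply: (inj_map val_inj).
have sorted_ord n : sorted (relpre val ltn) (enum 'I_n).
  by rewrite -sorted_map val_enum_ord iota_ltn_sorted.
apply: (irr_sorted_eq ltn_trans ltnn).
- rewrite sorted_map; apply: sorted_filter (sorted_ord N).
  by move=> ? ? ?; apply: ltn_trans.
- rewrite -map_comp sorted_map; apply: sorted_filter.
    by move=> ? ? ?; apply: ltn_trans.
  by apply: sub_sorted (sorted_ord _) => i j; exact: enum_val_ltn.
- apply: eq_mem_map => v; rewrite mem_filter mem_enum andbT.
  apply/idP/mapP => [evf | [i + ->]]; last by rewrite mem_filter mem_enum andbT.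
  have vU : v \in U by case/orP: evf => [/eU|/fU].
  exists (enum_rank_in vU v); last by rewrite (enum_rankK_in vU vU).
  by rewrite mem_filter (enum_rankK_in vU vU) evf mem_enum.
Qed.

Lemma pattern_of_relabel (e f : {set 'I_N}) : e \subset U -> f \subset U ->
  pattern_of (val_of @^-1: e) (val_of @^-1: f) = pattern_of e f.
Proof.
move=> eU fU; rewrite /pattern_of filter_enum_relabel //.
rewrite (@eq_filter _ _ (fun i => (val_of i \in e) || (val_of i \in f))) => [|i];
  last by rewrite !inE.
case: [seq _ <- _ | _] => [|h s] //=; congr (_ :: _); first by rewrite !inE.
by rewrite -map_comp; apply: eq_map => i; rewrite /= !inE.
Qed.

Lemma relabel_inj (S1 S2 : {set {set 'I_N}}) : cover S1 = U -> cover S2 = U ->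
  relabel S1 = relabel S2 -> S1 = S2.
Proof.
suff relabelK S : cover S = U -> [set val_of @: e | e : {set _} in relabel S] = S.
  by move=> c1 c2 h; rewrite -(relabelK _ c1) -(relabelK _ c2) h.
move=> cS; rewrite -imset_comp -[RHS]imset_id; apply: eq_in_imset => e eS /=.
by apply: preimset_enum_valK; rewrite -cS; exact: bigcup_sup.
Qed.

Lemma relabel_rmatching r (S : {set {set 'I_N}}) :
  runiform r S -> trivIset S -> cover S = U -> is_rmatching r (relabel S).
Proof.
move=> /runiformP uS /trivIsetP tS cS.
have sU e : e \in S -> e \subset U by rewrite -cS; exact: bigcup_sup.
apply/and3P; split.
- by apply/forall_inP => _ /imsetP[e eS ->]; rewrite card_preimset_enum_val ?sU // uS.
- apply/trivIsetP => _ _ /imsetP[e eS ->] /imsetP[f fS ->] ne.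
  have ef : e != f by apply: contraNneq ne => ->.
  by rewrite -setI_eq0 -preimsetI (disjoint_setI0 (tS _ _ eS fS ef)) preimset0.
- apply/eqP/setP => i; rewrite inE.
  have /bigcupP[e eS ie] : val_of i \in cover S by rewrite cS enum_valP.
  by apply/bigcupP; exists (val_of @^-1: e); [apply: imset_f | rewrite inE].
Qed.

Lemma relabel_clique (P : seq bool -> bool) (S : {set {set 'I_N}}) :
  cover S = U -> is_clique P S -> is_clique P (relabel S).
Proof.
move=> cS /forall_inP clS.
have sU e : e \in S -> e \subset U by rewrite -cS; exact: bigcup_sup.
apply/forall_inP => _ /imsetP[e eS ->]; apply/forall_inP => _ /imsetP[f fS ->].
apply/implyP => ne; rewrite pattern_of_relabel ?sU //.
have ef : e != f by apply: contraNneq ne => ->.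
by move: (clS _ eS) => /forall_inP/(_ _ fS)/implyP; apply.
Qed.
End Relabel.

Lemma nth_trace_le r N (M : {set {set 'I_N}}) i : is_rmatching r M ->
  nth 0 (trace M) i <= r.
Proof.
case/and3P => /forall_inP uM tM /eqP cM.
have [ilt|ige] := ltnP i (size (trace M)); last by rewrite nth_default.
have /mapP[v _ ->] := mem_nth 0 ilt.
have vM : v \in cover M by rewrite cM inE.
rewrite /pos_in_edge -(eqP (uM _ (pblock_mem vM))); apply/subset_leq_card/subsetP => u.
by rewrite inE => /andP[_ /exists_inP[e eM /andP[ue ve]]]; rewrite (def_pblock tM eM ve).
Qed.

Lemma is_cliqueS N (P : seq bool -> bool) (S S' : {set {set 'I_N}}) :
  S' \subset S -> is_clique P S -> is_clique P S'.
Proof.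
move=> /subsetP sS'S /forall_inP clS; apply/forall_inP => e /sS'S eS.
by apply/forall_inP => f /sS'S fS; move: (clS _ eS) => /forall_inP; apply.
Qed.

Section Cliques.
Variables (r N : nat) (P : seq bool -> bool).
Hypothesis r_gt0 : 0 < r.

Definition cliques k : {set {set {set 'I_N}}} :=
  [set S | [&& runiform r S, trivIset S, is_clique P S & #|S| == k]].

Definition trace_code k (S : {set {set 'I_N}}) : {ffun 'I_(r * k) -> 'I_r.+1} :=
  [ffun i : 'I_(r * k) => inord (nth 0 (trace (relabel (cover S) S)) i)].

Lemma card_cliques k : cliques_reconstructible r P ->
  #|cliques k| <= 'C(N, r * k) * r.+1 ^ (r * k).
Proof.
move=> recon; pose F S := (cover S, trace_code k S).
have cover_cliques S : S \in cliques k -> #|cover S| = r * k.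
  by rewrite inE => /and4P[uS tS _ /eqP <-]; rewrite (card_cover_runiform uS tS).
rewrite -(@card_in_imset _ _ F) => [|S1 S2 S1k S2k [c12 code12]]; last first.
  move: (S1k) (S2k); rewrite !inE => /and4P[u1 t1 cl1 _] /and4P[u2 t2 cl2 _].
  apply: (relabel_inj (erefl (cover S1))) => //.
  have m1 := relabel_rmatching u1 t1 (erefl (cover S1)).
  have m2 := relabel_rmatching u2 t2 (esym c12).
  apply: recon => //; [exact: relabel_clique | exact: relabel_clique (esym c12) cl2 |].
  move: code12; rewrite /trace_code -c12 => code12.
  apply: (@eq_from_nth _ 0) => [|i]; first by rewrite !size_map.
  rewrite size_map size_enum_ord => ilt0.
  have ilt : i < r * k by rewrite -(cover_cliques S1).
  move/ffunP/(_ (Ordinal ilt))/(congr1 val): code12; rewrite !ffunE /=.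
  by rewrite !inordK // ltnS; apply: nth_trace_le.
have <- : #|setX [set U : {set 'I_N} | #|U| == r * k] [set: {ffun 'I_(r * k) -> 'I_r.+1}]|
          = 'C(N, r * k) * r.+1 ^ (r * k).
  by rewrite cardsX cardsT card_ffun !card_ord card_draws card_ord.
apply/subset_leq_card/subsetP => _ /imsetP[S Sk ->].
by rewrite !inE cover_cliques ?eqxx.
Qed.

Lemma zP_cliques M k : M \in rmatchings_on r [set: 'I_N] -> k <= zP P M ->
  exists2 S, S \in cliques k & S \subset M.
Proof.
rewrite inE => /and3P[uM tM _].
pose cliqueM (S : {set {set 'I_N}}) := (S \subset M) && is_clique P S.
have [|S0] := @eq_bigmax_cond _ cliqueM (fun S => #|S|).
  apply/card_gt0P; exists set0; rewrite unfold_in /= sub0set.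
  by apply/forall_inP => e; rewrite inE.
rewrite unfold_in => /andP[sS0M clS0] maxS0.
have -> : zP P M = #|S0| by rewrite -maxS0.
move=> /card_geqP[s [uniq_s size_s sub_s]].
have sSS0 : [set x in s] \subset S0 by apply/subsetP => x; rewrite inE => /sub_s.
have sSM := subset_trans sSS0 sS0M.
exists [set x in s] => //; rewrite inE (runiformS sSM uM) (trivIsetS sSM tM).
by rewrite (is_cliqueS sSS0) // cardsE (card_uniqP uniq_s) size_s eqxx.
Qed.

Lemma card_zP_ge n k : N = r * n ->
  #|[set M in rmatchings_on r [set: 'I_N] | k <= zP P M]| <=
  #|cliques k| * num_rmatchings r (n - k).
Proof.
move=> Nrn; have sub_bigcup : [set M in rmatchings_on r [set: 'I_N] | k <= zP P M] \subset
    \bigcup_(S in cliques k) [set M in rmatchings_on r setT | S \subset M].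
  apply/subsetP => M; rewrite inE => /andP[MT /(zP_cliques MT)[S Sk sSM]].
  by apply/bigcupP; exists S; rewrite // inE MT.
apply: (leq_trans (subset_leq_card sub_bigcup)); apply: (leq_trans (card_big_setU _ _ _)).
rewrite -sum_nat_const; apply: leq_sum => S; rewrite inE => /and4P[uS tS _ /eqP Sk].
rewrite card_rmatchings_on_sup ?subsetT // (card_rmatchings_on r_gt0 (m := n - k)) //.
by rewrite cardsD setTI cardsT card_ord (card_cover_runiform uS tS) Sk Nrn mulnBr.
Qed.
End Cliques.

Lemma ffact_leq_expn n k : n ^_ k <= n ^ k.
Proof. by elim: k => // k IH; rewrite ffactnSr expnSr leq_mul ?leq_subr. Qed.

Lemma card_zP_ge_fact r n k (P : seq bool -> bool) : 0 < r -> cliques_reconstructible r P ->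
  #|[set M in rmatchings_on r [set: 'I_(r * n)] | k <= zP P M]| * (r * k)`! <=
  r.+1 ^ (r * k) * r`! ^ k * n ^ k * num_rmatchings r n.
Proof.
move=> r_gt0 recon.
apply: leq_trans (leq_mul (card_zP_ge P r_gt0 k erefl) (leqnn _)) _.
apply: leq_trans (leq_mul (leq_mul (card_cliques (r * n) k recon) (leqnn _)) (leqnn _)) _.
have [le_kn|lt_nk] := leqP k n; last by rewrite bin_small ?ltn_pmul2l.
have -> : 'C(r * n, r * k) * r.+1 ^ (r * k) * num_rmatchings r (n - k) * (r * k)`! =
          r.+1 ^ (r * k) * ((r * n) ^_ (r * k) * num_rmatchings r (n - k)).
  by rewrite -bin_ffact; ring.
by rewrite ffact_num_rmatchings // !mulnA leq_mul2r leq_mul2l ffact_leq_expn !orbT.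
Qed.

From mathcomp Require Import all_classical all_reals all_analysis.
Import Order.TTheory GRing.Theory Num.Theory.
Import numFieldNormedType.Exports.
Local Open Scope ring_scope.

Section FirstMoment.
Variable R : realType.

Lemma expn_self_le_expR_fact (j : nat) : (j%:R : R) ^+ j <= expR 1 ^+ j * j`!%:R.
Proof.
case: j => [|j]; first by rewrite !expr0 mul1r.
have := expR_ge1Dxn j (ler0n R j.+1).
rewrite -[X in expR X]mulr1 expRM_natl => h.
by rewrite -ler_pdivrMr ?ltr0n ?fact_gt0 //; apply: le_trans h; rewrite lerDr.
Qed.

Definition first_moment_const (r : nat) : R := (r.+1 ^ r * r`!)%:R * expR 1 ^+ r.

Lemma first_moment_const_ge1 r : 1 <= first_moment_const r.
Proof.
apply: mulr_ege1; first by rewrite ler1n muln_gt0 expn_gt0 fact_gt0.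
by apply/exprn_ege1/ltW; rewrite expR_gt1.
Qed.

Lemma first_moment_le (r n k : nat) :
  2 ^+ r * first_moment_const r * n%:R <= k%:R ^+ r ->
  ((r.+1 ^ (r * k) * r`! ^ k * n ^ k)%:R : R) * n%:R <= (r * k)`!%:R.
Proof.
set c := first_moment_const r => hk.
have c0 : 0 <= c by apply: le_trans (first_moment_const_ge1 r).
have cn0 : 0 <= c * n%:R by rewrite mulr_ge0.
have n_le : (n%:R : R) <= 2 ^+ (r * k).
  apply: le_trans (_ : k%:R ^+ r <= _).
    apply: le_trans hk; rewrite -[leLHS]mul1r ler_wpM2r //.
    by apply: mulr_ege1; [apply: exprn_ege1; rewrite ler1n | exact: first_moment_const_ge1].
  rewrite mulnC exprM; apply: lerXn2r; rewrite ?nnegrE ?exprn_ge0 //.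
  by rewrite -natrX ler_nat ltnW // ltn_expl.
have expand : ((r.+1 ^ (r * k) * r`! ^ k * n ^ k)%:R : R) * expR 1 ^+ (r * k) = (c * n%:R) ^+ k.
  rewrite /c /first_moment_const !natrM !natrX !exprMn -!exprM; ring.
rewrite -(ler_pM2r (exprn_gt0 (r * k) (expR_gt0 1))) mulrAC expand.
apply: le_trans (_ : (c * n%:R) ^+ k * 2 ^+ (r * k) <= _); first by rewrite ler_wpM2l ?exprn_ge0.
apply: le_trans (_ : k%:R ^+ (r * k) <= _).
  rewrite exprM -exprMn mulrC mulrA [leRHS]exprM.
  by apply: lerXn2r; rewrite // nnegrE ?exprn_ge0 // !mulr_ge0 ?exprn_ge0.
rewrite mulrC; apply: le_trans (expn_self_le_expR_fact (r * k)).
have [->|r_gt0] := posnP r; first by rewrite mul0n !expr0.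
by apply: lerXn2r; rewrite ?nnegrE // ler_nat leq_pmull.
Qed.
End FirstMoment.

Section Probability.
Variables (R : realType) (r n : nat).
Local Notation matching := {set {set 'I_(r * n)}}.

Lemma prob_RM_ge_subVn (Q : matching -> bool) m : (0 < m)%N ->
  (0 < #|[set M : matching | is_rmatching r M]|)%N ->
  (#|[set M : matching | is_rmatching r M && ~~ Q M]| * m <=
     #|[set M : matching | is_rmatching r M]|)%N ->
  1 - m%:R^-1 <= @prob_RM R r n Q <= 1.
Proof.
set A := [set M : matching | is_rmatching r M]; move=> m_gt0 A_gt0 bad_le.
rewrite /prob_RM -/A.
have -> : [set M | is_rmatching r M && Q M] = A :&: [set M | Q M].
  by apply/setP => M; rewrite !inE.
have eB : [set M | is_rmatching r M && ~~ Q M] = A :\: [set M | Q M].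
  by apply/setP => M; rewrite !inE andbC.
rewrite eB -(cardsID [set M | Q M] A) in A_gt0 bad_le *.
set g := #|A :&: _|; set b := #|A :\: _|.
have gb_gt0 : (0 : R) < (g + b)%:R by rewrite ltr0n.
rewrite ler_pdivrMr // mul1r ler_nat leq_addr andbT.
have -> : g%:R / (g + b)%:R = 1 - b%:R / (g + b)%:R :> R.
  by rewrite natrD; field; rewrite -natrD lt0r_neq0.
rewrite lerD2l lerN2 ler_pdivrMr // mulrC ler_pdivlMr ?ltr0n //.
by rewrite -natrM ler_nat.
Qed.
End Probability.

Lemma card_rmatchings r n : (0 < r)%N ->
  #|[set M : {set {set 'I_(r * n)}} | is_rmatching r M]| = num_rmatchings r n.
Proof.
move=> r_gt0; rewrite -(card_rmatchings_on r_gt0 (W := [set: 'I_(r * n)])).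
  by apply: eq_card => M; rewrite !inE.
by rewrite cardsT card_ord.
Qed.

Lemma exprn_powRV (R : realType) (a : R) (r : nat) : 0 <= a -> (0 < r)%N ->
  (a `^ r%:R^-1) ^+ r = a.
Proof.
move=> a0 r0; rewrite -powR_mulrn ?powR_ge0 // -powRrM mulVf ?powRr1 //.
by rewrite pnatr_eq0 -lt0n.
Qed.

Lemma prob_zP_small (R : realType) r (P : seq bool -> bool) (C : R) n :
  (0 < r)%N -> cliques_reconstructible r P -> 0 <= C ->
  C ^+ r = 2 ^+ r * first_moment_const R r -> (0 < n)%N ->
  1 - n%:R^-1 <= @prob_RM R r n (fun M => (zP P M)%:R <= C * n%:R `^ r%:R^-1) <= 1.
Proof.
move=> r_gt0 recon C0 Cr n_gt0.
have A_gt0 := num_rmatchings_gt0 n r_gt0; rewrite -(card_rmatchings n r_gt0) in A_gt0.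
apply: prob_RM_ge_subVn => //.
set x := C * n%:R `^ r%:R^-1; pose k := (Num.truncn x).+1.
have x0 : 0 <= x by rewrite mulr_ge0 ?powR_ge0.
have hk : 2 ^+ r * first_moment_const R r * n%:R <= k%:R ^+ r.
  rewrite -Cr -(exprn_powRV (ler0n R n) r_gt0) -exprMn.
  by apply: lerXn2r; rewrite -/x ?nnegrE ?ler0n // ltW // truncnS_gt.
have moment : (r.+1 ^ (r * k) * r`! ^ k * n ^ k * n <= (r * k)`!)%N.
  by rewrite -(ler_nat R) natrM; exact: first_moment_le hk.
apply: leq_trans (_ : #|[set M in rmatchings_on r [set: 'I_(r * n)] | k <= zP P M]| * n <= _)%N.
  rewrite leq_mul2r; apply/orP; right; apply/subset_leq_card/fintype.subsetP => M.
  rewrite [in M \in _]inE [in X in _ -> X]inE [in X in _ -> X]inE -ltNge.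
  by move=> /andP[MT x_lt]; apply/andP; split; [exact: MT | rewrite truncn_lt_nat].
rewrite (card_rmatchings n r_gt0) -(leq_pmul2r (fact_gt0 (r * k))) mulnAC.
apply: leq_trans (leq_mul (card_zP_ge_fact n k r_gt0 recon) (leqnn n)) _.
by rewrite mulnAC mulnC leq_mul2l moment orbT.
Qed.

Local Open Scope classical_set_scope.

Lemma cvg_to1_of_ge_subVn (R : realType) (u : R^nat) :
  (forall n, (0 < n)%N -> 1 - n%:R^-1 <= u n <= 1) -> u @ \oo --> (1 : R).
Proof.
move=> hu; rewrite -cvg_shiftS.
apply: (@squeeze_cvgr _ _ _ _ (fun n => 1 - harmonic n) (fun _ => 1)).
- by apply: nearW => n; exact: hu.
- rewrite -[X in _ --> X]subr0; apply: cvgB; [exact: cvg_cst | exact: cvg_harmonic].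
- exact: cvg_cst.
Qed.

Unset Implicit Arguments.
Theorem mainTheorem7 (R : realType) (r : nat) (P : seq bool -> bool) :
  (2 <= r)%N ->
  (forall w, P w -> is_rpattern r w) ->
  cliques_reconstructible r P ->
  exists C : R, 0 < C /\
    (((fun n : nat =>
       @prob_RM R r n (fun M => ((zP P M)%:R <= C * powR (n%:R) (r%:R^-1))%R))
       : R^nat) @ \oo --> (1 : R)).
Proof.
move=> r_ge2 _ recon; have r_gt0 : (0 < r)%N by apply: leq_trans r_ge2.
have c_gt0 : 0 < first_moment_const R r by apply: lt_le_trans (first_moment_const_ge1 R r).
pose C : R := 2 * first_moment_const R r `^ r%:R^-1.
have C_gt0 : 0 < C by rewrite mulr_gt0 ?powR_gt0.
have Cr : C ^+ r = 2 ^+ r * first_moment_const R r by rewrite exprMn exprn_powRV ?ltW.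
exists C; split => //; apply: cvg_to1_of_ge_subVn => n n_gt0.
exact: prob_zP_small r_gt0 recon (ltW C_gt0) Cr n_gt0.
Qed.
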